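(* If $\{Q^{a,n}\}_{(a,n)\in\mathcal I\times\mathbb Z}$ is a collection of polynomials in $\mathcal O$ with widening gap, then the sum $\sum_{(a,n)\in\mathcal I\times\mathbb Z}\frac{\partial Q^{a,n}}{\partial X^{a,n}}$ has only finitely many nonzero terms, and hence is a well-defined polynomial in $\mathcal O$.
   Context: $\mathcal I$ is a finite index set and $\mathcal O=\mathbb C[X^{a,n}]_{(a,n)\in\mathcal I\times\mathbb Z}$. A collection $\{P^{a,n}\}_{(a,n)\in\mathcal I\times\mathbb Z}$ of polynomials in $\mathcal O$ has widening gap if, for every $K\ge1$, $P^{a,n}\in\mathbb C[X^{b,m}:|m|<|n|-K,\ b\in\mathcal I]$ for all $a\in\mathcal I$, for all but finitely many $n\in\mathbb Z$. *)

(* multinomials' monoid algebra {malg R[{cmonom K}]} is the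
   polynomial ring over R in the variables indexed by the choiceType K. *)
From HB Require Import structures.
From mathcomp Require Import all_boot all_order all_algebra.
From mathcomp Require Import finmap.
From mathcomp Require Import monalg.
From mathcomp Require Import complex.
From mathcomp Require Import Rstruct.
From Stdlib Require Import Reals.

Set Implicit Arguments.
Unset Strict Implicit.
Unset Printing Implicit Defensive.

Import Order.TTheory GRing.Theory Num.Theory.
Local Open Scope ring_scope.

Definition CC : Type := complex.complex R.

Definition Var (I : finType) : choiceType := (I * int)%type.
Definition Opoly (I : finType) := {malg CC[{cmonom (Var I)}]}.

Definition pderiv (K : choiceType) (R : ringType) (v : K)
    (P : {malg R[{cmonom K}]}) : {malg R[{cmonom K}]} :=
  \sum_(m <- msupp P) << (P@_m *+ (m v)) *g (divcm m (ucm v)) >>.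

Definition in_subring (K : choiceType) (R : ringType) (S : K -> Prop)
    (P : {malg R[{cmonom K}]}) : Prop :=
  forall m, m \in msupp P -> forall v : K, (m v != 0)%N -> S v.

Definition widening_gap (I : finType) (P : I -> int -> Opoly I) : Prop :=
  forall K : int, 1 <= K ->
    exists s : seq int, forall n : int, n \notin s ->
      forall a : I,
        in_subring (fun v : Var I => `|v.2| < `|n| - K) (P a n).

From HB Require Import structures.
From mathcomp Require Import all_boot all_order all_algebra.
From mathcomp Require Import finmap monalg complex Rstruct.

Set Implicit Arguments.
Unset Strict Implicit.
Unset Printing Implicit Defensive.

Local Open Scope ring_scope.
Import Order.TTheory GRing.Theory Num.Theory.

(* Take K = 1 in the widening-gap condition: for n outside a finite set, every
   monomial of Q^{a,n} only involves variables X^{b,m} with |m| < |n| - 1. In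
   particular X^{a,n} does not occur in Q^{a,n}, so dQ^{a,n}/dX^{a,n} = 0. *)

Lemma pderiv_eq0 (K : choiceType) (R : nzRingType) (v : K)
    (P : {malg R[{cmonom K}]}) :
  (forall m, m \in msupp P -> m v = 0%N) -> pderiv v P = 0.
Proof.
move=> Pv; rewrite /pderiv big_seq big1 // => m /Pv ->.
by rewrite mulr0n monalgU0.
Qed.

Lemma in_subring_pderiv_eq0 (K : choiceType) (R : nzRingType) (S : K -> Prop)
    (v : K) (P : {malg R[{cmonom K}]}) :
  in_subring S P -> ~ S v -> pderiv v P = 0.
Proof.
move=> PS Sv; apply: pderiv_eq0 => m mP.
by apply/eqP; apply: contra_notT Sv; apply: PS mP v.
Qed.

Theorem corollary3p4 (I : finType) (Q : I -> int -> Opoly I) :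
  widening_gap Q ->
  exists s : seq (I * int), forall (a : I) (n : int),
    pderiv ((a, n) : Var I) (Q a n) != 0 -> (a, n) \in s.
Proof.
case/(_ 1 (lexx _)) => s gap.
exists [seq (a, n) | a <- enum I, n <- s] => a n.
have [ns _ | ns] := boolP (n \in s).
  by apply/allpairsP; exists (a, n); rewrite mem_enum.
rewrite (in_subring_pderiv_eq0 (gap n ns a)) ?eqxx //=.
by apply/negP; rewrite -leNgt gerBl.
Qed.
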